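(* Let $G$ be a finite solvable $\mathbf{GC}^*$-group and let $K = G_\infty$, and assume $K > 1$. Let $N < K$ be such that either $N = 1$ or $N$ is the unique minimal normal subgroup of $G$ contained in $K$. If $\gcd(|G/K|, |K/N|) = 1$, then $G$ is a Frobenius group with Frobenius kernel $K$.
   Context: $G_\infty$ denotes the nilpotent residual of $G$, i.e. the last term of the lower central series of $G$. Galois automorphisms act on characters by $\chi^\alpha(g)=\chi(g)^\alpha$; two irreducible characters of $G$ are Galois conjugate if one is the image of the other under some element of $\mathrm{Gal}(\mathbb{Q}_n|\mathbb{Q})$ with $|G|$ dividing $n$. A finite group is a $\mathbf{GC}^*$-group if any two of its non-linear irreducible characters of the same degree are Galois conjugate. *)

From HB Require Import structures.
From mathcomp Require Import all_boot all_order all_algebra all_fingroup all_solvable all_field all_character.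
Set Implicit Arguments. Unset Strict Implicit. Unset Printing Implicit Defensive.
Import GRing.Theory Num.Theory.
Local Open Scope group_scope.
Local Open Scope ring_scope.

(* The series 'L_1(G) = G >= 'L_2(G) >= ... is non-increasing and stabilizes
   after at most #|G| steps, so 'L_#|G|(G) is its last (stable) term. *)
Definition nil_residual (gT : finGroupType) (G : {group gT}) : {group gT} :=
  ('L_#|G|(G))%G.

(* Two irreducible characters are Galois conjugate: one is the image of the
   other under a field automorphism of algC (every element of Gal(Q_n/Q)
   extends to such an automorphism, and every such automorphism restricts
   to Gal(Q_n/Q)). *)
Definition galois_conj (gT : finGroupType) (G : {group gT}) (i j : Iirr G) :=
  exists u : {rmorphism algC -> algC}, 'chi[G]_j = cfAut u 'chi[G]_i.

Definition GCstar (gT : finGroupType) (G : {group gT}) : Prop :=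
  forall i j : Iirr G,
    ~~ ('chi[G]_i \is a linear_char) -> ~~ ('chi[G]_j \is a linear_char) ->
    'chi[G]_i 1%g = 'chi[G]_j 1%g -> galois_conj i j.

From mathcomp Require Import all_boot all_order all_algebra all_fingroup all_solvable all_field all_character.
Set Implicit Arguments. Unset Strict Implicit. Unset Printing Implicit Defensive.
Import GRing.Theory Num.Theory.

(* Write K for the nilpotent residual; K <= G' and K < G since G is solvable.
   By the Frobenius criterion it suffices that every nontrivial theta in
   Irr(K) has inertia group T = K. The coprimality hypothesis, through the
   structure of the unique minimal normal subgroup N, makes |G : K| coprime to
   o(theta) theta(1), so theta has a unique extension chi to T with
   o(chi) = o(theta). If T > K, a nontrivial linear character of the solvable
   group T/K turns chi into a second extension; inducing both to G gives two
   distinct nonlinear (as K <= G') irreducibles of the same degree, hence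
   Galois conjugate by some sigma. Then theta^sigma = theta^g for some g in G
   normalizing T, uniqueness forces chi^sigma = chi^g, and the two induced
   characters coincide, a contradiction. *)

Local Open Scope group_scope.

Section CharacterAut.
Local Open Scope ring_scope.
Variables (gT : finGroupType) (G : {group gT}).

Lemma cfDet_aut u (chi : 'CF(G)) :
  chi \is a character -> cfDet (cfAut u chi) = cfAut u (cfDet chi).
Proof.
move=> /char_reprP[rG ->]; rewrite -cfRepr_map !cfDetRepr.
apply/cfun_inP=> x Gx; rewrite cfunE /= cfunE !cfunE Gx /= !trace_mx11 !mxE.
by rewrite map_reprE det_map_mx.
Qed.

Lemma cfDet_order_aut u (chi : 'CF(G)) :
  chi \is a character -> 'o(cfAut u chi)%CF = 'o(chi)%CF.
Proof. by move=> Nchi; rewrite /cfDet_order cfDet_aut // cforder_aut. Qed.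

Lemma cfDet_order_conjg (chi : 'CF(G)) y : 'o(chi ^ y)%CF = 'o(chi)%CF.
Proof.
rewrite /cfDet_order cfDetConjg.
exact: (cforder_inj_rmorph (f := cfConjg y)) (can_inj (cfConjgK y)).
Qed.

Lemma inertia_aut u (phi : 'CF(G)) : 'I[cfAut u phi] = 'I[phi].
Proof. by apply/setP=> y; rewrite !inE -cfAutConjg (inj_eq (cfAut_inj u)). Qed.

Lemma solvable_lin_irr_neq0 :
  solvable G -> G :!=: 1%g -> exists2 j : Iirr G, j != 0 & 'chi_j \is a linear_char.
Proof.
move=> solG ntG.
have : (1 < #|[pred j : Iirr G | 'chi_j \is a linear_char]|)%N.
  by rewrite card_lin_irr indexg_gt1 proper_subn // (sol_der1_proper solG).
rewrite (cardD1 0) inE irr0 cfun1_lin_char ltnS lt0n.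
by case/pred0Pn=> j /andP[nzj lin_j]; exists j.
Qed.

End CharacterAut.

Section Clifford.
Local Open Scope ring_scope.
Variables (gT : finGroupType) (G H : {group gT}).

Lemma constt_Res_cfclass (i : Iirr G) (s t : Iirr H) :
    H <| G -> s \in irr_constt ('Res[H] 'chi[G]_i) ->
  t \in irr_constt ('Res[H] 'chi_i) -> 'chi_t \in ('chi_s ^: G)%CF.
Proof.
move=> nsHG sHi; apply: contraLR => notGs.
rewrite irr_consttE negbK (Clifford_Res_sum_cfclass nsHG sHi) cfdotZl cfdot_suml.
rewrite big1_seq ?mulr0 // => _ /andP[_ /cfclassP[y Gy ->]].
rewrite -conjg_IirrE cfdot_irr; case: eqP => // Dt.
by case/negP: notGs; rewrite -Dt conjg_IirrE; apply/cfclassP; exists y.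
Qed.

Lemma constt_Res_nonlinear (i : Iirr G) (t : Iirr H) :
    H \subset (G^`(1))%g -> t != 0 ->
  t \in irr_constt ('Res[H] 'chi[G]_i) -> ~~ ('chi_i \is a linear_char).
Proof.
move=> sHG' nzt; apply: contraL => lin_i.
have sH_ker : H \subset cfker 'chi_i := subset_trans sHG' (lin_char_der1 lin_i).
rewrite irr_consttE cfRes_sub_ker // cfdotZl -irr0 cfdot_irr.
by rewrite [_ == t]eq_sym (negPf nzt) mulr0 eqxx.
Qed.

Lemma Inertia_norm_aut_conjg u g (phi : 'CF(H)) :
  g \in G -> g \in 'N(H) -> cfAut u phi = (phi ^ g)%CF -> g \in 'N('I_G[phi]).
Proof.
move=> Gg nHg Dphi; apply/normP.
by rewrite conjIg (conjGid Gg) conjg_inertia // -Dphi inertia_aut.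
Qed.

Lemma GCstar_constt_Res_aut (i1 i2 : Iirr G) (t : Iirr H) :
    GCstar G -> H <| G -> H \subset (G^`(1))%g -> t != 0 ->
    t \in irr_constt ('Res[H] 'chi[G]_i1) ->
    t \in irr_constt ('Res[H] 'chi[G]_i2) ->
    'chi_i1 1%g = 'chi_i2 1%g ->
  exists2 u, 'chi_i2 = cfAut u 'chi_i1
           & exists2 g, g \in G & cfAut u 'chi_t = ('chi_t ^ g)%CF.
Proof.
move=> GC nsHG sHG' nzt t_i1 t_i2 eq_deg.
have [u Du] := GC i1 i2 (constt_Res_nonlinear sHG' nzt t_i1)
  (constt_Res_nonlinear sHG' nzt t_i2) eq_deg.
exists u => //.
have tu_i2 : aut_Iirr u t \in irr_constt ('Res[H] 'chi_i2).
  rewrite irr_consttE Du -cfAutRes aut_IirrE cfdot_aut_irr fmorph_eq0.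
  by rewrite -irr_consttE.
have /cfclassP[g Gg Dtu] := constt_Res_cfclass nsHG t_i2 tu_i2.
by exists g; rewrite // -aut_IirrE.
Qed.

End Clifford.

Section Extension.
Local Open Scope ring_scope.
Variables (gT : finGroupType) (H T : {group gT}).
Hypothesis nsHT : H <| T.

Lemma mul_mod_Iirr_ext (t : Iirr H) (c : Iirr T) (b : Iirr (T / H)) :
    'Res[H] 'chi_c = 'chi_t -> 'chi_b \is a linear_char ->
  'Res[H] 'chi_(mul_mod_Iirr c b) = 'chi_t /\ (mul_mod_Iirr c b == c) = (b == 0).
Proof.
move=> cHt lin_b; have [irrM injM _ _] := constt_Ind_ext nsHT cHt.
have Dcb : 'chi_(mul_mod_Iirr c b) = 'chi_(mod_Iirr b) * 'chi_c.
  by rewrite cfIirrE ?irrM.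
have bH1 : 'Res[H] 'chi_(mod_Iirr b) = 1.
  rewrite cfRes_sub_ker; last by rewrite mod_IirrE ?cfker_mod.
  by rewrite mod_IirrE // cfMod1 lin_char1 // scale1r.
have c0 : mul_mod_Iirr c (0 : Iirr (T / H)) = c.
  by rewrite /mul_mod_Iirr /mul_Iirr mod_Iirr0 irr0 mul1r irrK.
by rewrite Dcb rmorphM /= bH1 mul1r cHt -{2}c0 (inj_eq injM).
Qed.

Lemma coprime_ext_aut_conjg (t : Iirr H) (c : Iirr T) u g :
    g \in 'N(H) -> g \in 'N(T) ->
    'Res[H] 'chi_c = 'chi_t -> 'o('chi_c)%CF = 'o('chi_t)%CF ->
    coprime #|T : H| 'o('chi_t)%CF ->
    (forall d, 'Res[H] 'chi_d = 'chi_t -> coprime #|T : H| 'o('chi_d)%CF ->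
       d = c) ->
  cfAut u 'chi_t = ('chi_t ^ g)%CF -> cfAut u 'chi_c = ('chi_c ^ g)%CF.
Proof.
move=> nHg nTg cHt oc co_t Uc Dtu.
have /irrP[d Dd] : (cfAut u 'chi_c ^ g^-1)%CF \in irr T.
  by rewrite cfConjg_irr ?cfAut_irr ?mem_irr.
have dHt : 'Res[H] 'chi_d = 'chi_t.
  by rewrite -Dd -cfConjgRes_norm ?groupV // -cfAutRes cHt Dtu cfConjgK.
have od : 'o('chi_d)%CF = 'o('chi_t)%CF.
  by rewrite -Dd cfDet_order_conjg cfDet_order_aut ?irr_char.
by rewrite -[cfAut u _](cfConjgKV g) Dd (Uc d) // od.
Qed.

End Extension.

Section InertiaGCstar.
Local Open Scope ring_scope.
Variables (gT : finGroupType) (G K : {group gT}).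
Hypotheses (solG : solvable G) (GC : GCstar G).
Hypotheses (nsKG : K <| G) (sKG' : K \subset (G^`(1))%g).

Theorem GCstar_Inertia_irr (t : Iirr K) :
    t != 0 -> coprime #|G : K| ('o('chi_t)%CF * Num.truncn ('chi_t 1%g)) ->
  'I_G['chi_t] = K.
Proof.
move=> nzt coGK; have [sKG nKG] := andP nsKG.
set theta := 'chi_t; set T := 'I_G[theta]%G.
have sTG : T \subset G by rewrite Inertia_sub.
have nsKT : K <| T := normal_Inertia theta sKG.
have solTK : solvable (T / K) := quotient_sol _ (solvableS sTG solG).
apply/eqP; rewrite eqEsubset sub_Inertia // andbT; apply: contraT => notTK.
have coT : coprime #|T : K| ('o(theta)%CF * Num.truncn (theta 1%g)).
  exact: coprime_dvdl (indexSg (normal_sub nsKT) sTG) coGK.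
have [c [cKt oc Uc]] := extend_solvable_coprime_irr nsKT solTK (subsetIr _ _) coT.
have ntTK : (T / K)%g :!=: 1%g by rewrite -subG1 quotient_sub1 ?normal_norm.
have [b nzb lin_b] := solvable_lin_irr_neq0 solTK ntTK.
have [c'Kt] := mul_mod_Iirr_ext nsKT cKt lin_b; set c' := mul_mod_Iirr c b.
rewrite (negPf nzb) => /negbT neq_c'c.
have [irrInd injInd _ _ dotInd] := constt_Inertia_bijection t nsKG.
have Ind_ext d : 'Res[K] 'chi_d = theta ->
  [/\ d \in irr_constt ('Ind[T] theta), 'chi_(Ind_Iirr G d) = 'Ind 'chi_d
    & t \in irr_constt ('Res[K] 'chi_(Ind_Iirr G d))].
- move=> dKt; have Ad : d \in irr_constt ('Ind[T] theta).
    by rewrite constt_Ind_Res dKt constt_irr inE.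
  have DInd := cfIirrE (irrInd d Ad); split=> //.
  by rewrite irr_consttE DInd -(dotInd d Ad) dKt cfnorm_irr oner_eq0.
have [Ac DIc t_Ic] := Ind_ext c cKt; have [Ac' DIc' t_Ic'] := Ind_ext c' c'Kt.
have eq_deg : 'chi_(Ind_Iirr G c) 1%g = 'chi_(Ind_Iirr G c') 1%g.
  by rewrite DIc DIc' !cfInd1 // -(cfRes1 K 'chi_c) -(cfRes1 K 'chi_c') cKt c'Kt.
have [u DIu [g Gg Dtu]] := GCstar_constt_Res_aut GC nsKG sKG' nzt t_Ic t_Ic' eq_deg.
have nKg : g \in 'N(K) := subsetP nKG g Gg.
have nTg : g \in 'N(T) := Inertia_norm_aut_conjg Gg nKg Dtu.
have Dcu : cfAut u 'chi_c = ('chi_c ^ g)%CF.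
  apply: coprime_ext_aut_conjg nKg nTg cKt oc _ Uc Dtu.
  exact: coprime_dvdr (dvdn_mulr _ _) coT.
case/negP: neq_c'c; apply/eqP/(injInd _ _ Ac' Ac)/irr_inj.
rewrite DIu DIc cfAutInd Dcu -cfConjgInd_norm ?(subsetP (normG G)) //.
by rewrite cfConjg_id.
Qed.

End InertiaGCstar.

Section Frobenius.
Local Open Scope ring_scope.
Variables (gT : finGroupType) (G K : {group gT}).

Theorem Frobenius_ker_Inertia :
    K :!=: 1%g -> K \proper G -> K <| G ->
    (forall t : Iirr K, t != 0 -> 'I_G['chi_t] = K) ->
  [Frobenius G with kernel K].
Proof.
move=> ntK ltKG nsKG IK; have [sKG nKG] := andP nsKG.
apply/Frobenius_kerP; split=> // x /setD1P[ntx Kx].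
apply/subsetP=> y /setIP[Gy cxy]; apply: contraT => notKy.
have nKy := subsetP nKG y Gy.
have actIirrK : is_action G (@conjg_Iirr _ K).
  split=> [z j k eq_jk | j z w Gz Gw].
    by apply/irr_inj/(can_inj (cfConjgK z)); rewrite -!conjg_IirrE eq_jk.
  by apply: irr_inj; rewrite !conjg_IirrE (cfConjgM _ nsKG).
pose ito := Action actIirrK; pose cto := ('Js \ (subsetT G))%act.
have acts_cto : [acts G, on classes K | cto].
  rewrite astabs_ract subsetIidl; apply/subsetP=> z Gz.
  rewrite !inE; apply/subsetP=> _ /imsetP[w Kw ->] /[!inE]/=.
  rewrite -class_rcoset norm_rlcoset ?(subsetP nKG) // class_lcoset.
  by apply: imset_f; rewrite memJ_norm ?(subsetP nKG).
(* Brauer's permutation lemma *)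
have fix_irr_classes : #|'Fix_ito[y]| = #|'Fix_(classes K | cto)[y]|.
  apply: card_afix_irr_classes => // j z _ Kz /imsetP[_ /imsetP[w Kw ->] ->].
  by rewrite conjg_IirrE cfConjgEJ // cfunJ.
have fix_irr0 : 'Fix_ito[y] = [set 0].
  apply/eqP; rewrite eqEsubset sub1set !inE sub1set inE /= conjg_Iirr0 eqxx.
  rewrite andbT; apply/subsetP=> j /afix1P /= fix_j; rewrite inE.
  apply: contraT => nzj; case/negP: notKy; rewrite -(IK j nzj) inE Gy inE nKy /=.
  by rewrite -conjg_IirrE fix_j.
have fix_1 : [set 1%g] \in 'Fix_(classes K | cto)[y].
  by rewrite inE classes1 /= inE sub1set inE /= conjs1g.
have fix_x : x ^: K \in 'Fix_(classes K | cto)[y].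
  rewrite inE mem_classes //= inE sub1set inE /=.
  rewrite -class_rcoset norm_rlcoset // class_lcoset.
  by rewrite /conjg -(cent1P cxy) mulKg.
have neq_1x : [set 1%g] != x ^: K.
  by apply: contraNneq ntx => /setP/(_ x); rewrite class_refl inE => ->.
have : (2 <= #|'Fix_(classes K | cto)[y]|)%N.
  have := cards2 [set 1%g] (x ^: K); rewrite neq_1x => <-.
  by apply/subset_leq_card/subsetP=> A /set2P[] ->.
by rewrite -fix_irr_classes fix_irr0 cards1.
Qed.

End Frobenius.

Section CoprimeDegree.
Local Open Scope ring_scope.
Variable gT : finGroupType.

Lemma dvd_irr1_index_abelian_coprime (K N : {group gT}) (t : Iirr K) :
    N <| K -> abelian N -> coprime #|N| #|K : N| ->
  (Num.truncn ('chi_t 1%g) %| #|K : N|)%N.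
Proof.
move=> nsNK abN coN; have [sNK nNK] := andP nsNK.
suff: ('chi_t 1%g %| #|K : N|%:R)%C by rewrite irr1_degree natrK -dvdC_nat.
have [s sRes] := constt_cfRes_irr N t; set lam := 'chi_s.
have lin_lam : lam \is a linear_char by apply/char_abelianP.
set I := 'I_K[lam]%G.
have sNI : N \subset I by rewrite sub_Inertia.
have sIK : I \subset K by rewrite Inertia_sub.
have nsNI : N <| I := normal_Inertia lam sNK.
have [irrInd _ imInd _ _] := constt_Inertia_bijection s nsNK.
have /imsetP[r rA Dt] : t \in Ind_Iirr K @: irr_constt ('Ind[I] lam).
  by rewrite imInd constt_Ind_Res.
have coI : coprime #|I : N| 'o(lam)%CF.
  rewrite coprime_sym; apply: coprime_dvdl (cfDet_order_dvdG lam) _.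
  exact: coprime_dvdr (indexSg sNI sIK) coN.
have [u [uN _ _]] := extend_coprime_linear_char nsNI lin_lam (subsetIr _ _) coI.
have [irrMu _ imM _] := constt_Ind_ext nsNI uN.
have := rA; rewrite imM => /codomP[b Dr].
have u1 : 'chi_u 1%g = 1 by rewrite -(cfRes1 N) uN lin_char1.
rewrite Dt cfIirrE ?irrInd // cfInd1 // Dr cfIirrE ?irrMu // cfunE u1 mulr1.
rewrite mod_IirrE // cfMod1 -(Lagrange_index sIK sNI) natrM.
rewrite dvdC_mul2l ?pnatr_eq0 -?lt0n ?indexg_gt0 //.
by rewrite -card_quotient ?normal_norm ?dvd_irr1_cardG.
Qed.

Lemma cfDet_order_dvd_index (K N : {group gT}) (t : Iirr K) :
  N \subset (K^`(1))%g -> ('o('chi_t)%CF %| #|K : N|)%N.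
Proof.
move=> sNK'; have lin_det := cfDet_lin_char 'chi_t.
rewrite /cfDet_order cforder_lin_char //; apply: dvdn_trans (exponent_dvdn _) _.
rewrite card_quotient ?normal_norm ?cfker_normal //.
exact/indexgS/(subset_trans sNK')/lin_char_der1.
Qed.

Lemma minnormal_uniq_sub (G K N L : {group gT}) :
    (forall M : {group gT}, minnormal M G -> M \subset K -> M :=: N) ->
  L :!=: 1%g -> G \subset 'N(L) -> L \subset K -> N \subset L.
Proof.
move=> uniqN ntL nLG sLK; have [M minM sML] := minnormal_exists ntL nLG.
by rewrite -(uniqN M minM (subset_trans sML sLK)).
Qed.

Lemma minnormal_uniq_sub_der1 (G K N : {group gT}) p :
    K <| G -> N \proper K ->
    (forall M : {group gT}, minnormal M G -> M \subset K -> M :=: N) ->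
    N :!=: 1%g -> prime p -> p.-group N -> ~~ (p %| #|K : N|)%N ->
  N \subset (K^`(1))%g.
Proof.
move=> nsKG ltNK uniqN ntN pr_p pN p'KN; have nKG := normal_norm nsKG.
have sub_char (L : {group gT}) : L \char K -> L :!=: 1%g -> N \subset L.
  move=> chL ntL; apply: minnormal_uniq_sub uniqN ntL _ (char_sub chL).
  exact: char_norm_trans chL nKG.
apply: contraT => notNK'.
have abK : abelian K.
  apply/derG1P/eqP; apply: contraR notNK'; exact: sub_char (der_char 1 K).
have Kp'1 : 'O_p^'(K) = 1%g.
  apply/eqP; apply: contraR ntN => /(sub_char _ (pcore_char _ _)) sNKp'.
  by rewrite trivg_card1 (pnat_1 pN (pgroupS sNKp' (pcore_pgroup _ _))).
have pK : p.-group K.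
  have := nilpotent_pcoreC p (abelian_nil abK); rewrite Kp'1 dprodg1 => <-.
  exact: pcore_pgroup.
have /eqP : #|K : N| = 1%N.
  by rewrite (pnat_1 (pnat_dvd (dvdn_indexg K N) pK)) // p'natE.
by rewrite indexg_eq1 => sKN; case/negP: (proper_subn ltNK).
Qed.

Lemma coprime_index_det_order_irr1 (G K N : {group gT}) (t : Iirr K) :
    solvable G -> K <| G -> N \proper K ->
    (N :=: 1%g \/ [/\ minnormal N G, N \subset K &
       forall M : {group gT}, minnormal M G -> M \subset K -> M :=: N]) ->
    coprime #|G : K| #|K : N| ->
  coprime #|G : K| ('o('chi_t)%CF * Num.truncn ('chi_t 1%g)).
Proof.
move=> solG nsKG ltNK hN co; have [sKG nKG] := andP nsKG.
have sNK := proper_sub ltNK.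
have [coN | ncoN] := boolP (coprime #|G : K| #|N|).
  have coK : coprime #|G : K| #|K| by rewrite -(Lagrange sNK) coprimeMr coN co.
  have dv_deg : (Num.truncn ('chi_t 1%g) %| #|K|)%N.
    by have := dvd_irr1_cardG t; rewrite irr1_degree dvdC_nat natrK.
  by rewrite coprimeMr !(coprime_dvdr _ coK) ?cfDet_order_dvdG.
case: hN => [N1 | [minN _ uniqN]]; first by rewrite N1 cards1 coprimen1 in ncoN.
have [nNG ntN /is_abelemP[p pr_p abelN]] :=
  minnormal_solvable minN (subset_trans sNK sKG) solG.
have pN := abelem_pgroup abelN.
have p_dv_GK : (p %| #|G : K|)%N.
  by apply: contraR ncoN => p'GK; rewrite coprime_sym (pnat_coprime pN) ?p'natE.
have p'KN : ~~ (p %| #|K : N|)%N.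
  by rewrite -prime_coprime // (coprime_dvdl p_dv_GK co).
have coNKN : coprime #|N| #|K : N| by rewrite (pnat_coprime pN) ?p'natE.
have nsNK : N <| K by rewrite /normal sNK (subset_trans sKG nNG).
have dv_deg := dvd_irr1_index_abelian_coprime t nsNK (abelem_abelian abelN) coNKN.
have sNK' := minnormal_uniq_sub_der1 nsKG ltNK uniqN ntN pr_p pN p'KN.
by rewrite coprimeMr !(coprime_dvdr _ co) ?cfDet_order_dvd_index.
Qed.

End CoprimeDegree.

Section NilResidual.
Variables (gT : finGroupType) (G : {group gT}).

Lemma nil_residual_sub_der1 : nil_residual G \subset G^`(1).
Proof.
have [/card_le1_trivg G1 | G_gt1] := leqP #|G| 1; last by rewrite -lcn2 lcn_sub_leq.
by apply: subset_trans (lcn_sub _ _) _; rewrite {1}G1 sub1G.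
Qed.

Lemma nil_residual_proper : solvable G -> G :!=: 1 -> nil_residual G \proper G.
Proof.
move=> solG ntG; apply: sub_proper_trans nil_residual_sub_der1 _.
exact: sol_der1_proper solG (subxx G) ntG.
Qed.

End NilResidual.

Theorem lemma3p3 (gT : finGroupType) (G N : {group gT}) :
  solvable G -> GCstar G ->
  nil_residual G != 1 :> {set gT} ->
  N \proper nil_residual G ->
  (N :=: 1 \/
   [/\ minnormal N G, N \subset nil_residual G &
       forall M : {group gT}, minnormal M G -> M \subset nil_residual G ->
         M :=: N]) ->
  coprime #|G / nil_residual G| #|nil_residual G / N| ->
  [Frobenius G with kernel nil_residual G].
Proof.
move=> solG GC ntK ltNK hN co.
have nsKG : nil_residual G <| G := lcn_normal _ G.
have ntG : G :!=: 1 by apply: contraNneq ntK => G1; rewrite -subG1 -G1 normal_sub.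
have nNK : nil_residual G \subset 'N(N).
  case: hN => [-> | [/mingroupp/andP[_ nNG] _ _]]; first exact: norms1.
  exact: subset_trans (normal_sub nsKG) nNG.
rewrite (card_quotient (normal_norm nsKG)) (card_quotient nNK) in co.
apply: (Frobenius_ker_Inertia ntK (nil_residual_proper solG ntG) nsKG) => t nzt.
apply: (GCstar_Inertia_irr solG GC nsKG (nil_residual_sub_der1 G) nzt).
exact: coprime_index_det_order_irr1 solG nsKG ltNK hN co.
Qed.
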